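(* Let $L=\langle S,A,\to\rangle$ be a labelled transition system. If Duplicator wins a configuration $\langle (s,t),\dagger,\dagger,*\rangle_S$ in the $\emptyset$-generic bisimulation game on $L$, she has an eager winning strategy from this configuration.
   Context: An LTS is $\langle S,A,\to\rangle$ with states $S$, actions $A$ containing the internal action $\tau$, and $\to\subseteq S\times A\times S$; write $s\xrightarrow{a}t$. $\emptyset$-generic bisimulation game: with formal tags $\frown,\smile$, Spoiler-owned configurations $\langle (s,t),c,m,r\rangle_S$ and Duplicator-owned $\langle (s,t),c,m,r\rangle_D$ with $(s,t)\in S\times S$, $c\in (A\times S)\cup\{\dagger\}$, $m\in (S\times\{\frown,\smile\})\cup\{\dagger\}$, $r\in\{*,\checkmark\}$. Spoiler from $\langle (s,t),c,m,r\rangle_S$ may: (S1) move to $\langle (s,t),c,m,*\rangle_D$ if $c\neq\dagger$; (S2a) for some $s\xrightarrow{a}s'$, move to $\langle (s,t),(a,s'),(t,\frown),*\rangle_D$ if $c=\dagger$; (S2b) for some $s\xrightarrow{a}s'$, move to $\langle (s,t),(a,s'),(t,\frown),\checkmark\rangle_D$ if $c\neq (a,s')$; (S3) for some $t\xrightarrow{a}t'$, move to $\langle (t,s),(a,t'),(s,\frown),\checkmark\rangle_D$. Duplicator from $\langle (u,v),(a,u'),(\bar v,f),r\rangle_D$ may: (D1) move to $\langle (u',\bar v),\dagger,\dagger,\checkmark\rangle_S$ if $a=\tau$; (D2) if $f=\frown$ and $\bar v\xrightarrow{a}v'$: (a) move to $\langle (u',v'),(a,u'),(v',\smile),*\rangle_S$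 or (b) move to $\langle (u',v'),\dagger,\dagger,\checkmark\rangle_S$; (D3) for some $\bar v\xrightarrow{\tau}v'$: (a) move to $\langle (u,v'),(a,u'),(v',f),*\rangle_S$, or (b) only if $f=\smile$, move to $\langle (u',v'),\dagger,\dagger,\checkmark\rangle_S$. Duplicator wins a finite play if Spoiler gets stuck, and an infinite play if it has infinitely many $\checkmark$ rewards; other plays are won by Spoiler. A strategy of Duplicator is winning from a configuration if all plays from it consistent with the strategy are won by her. A strategy of Duplicator is eager if it never uses move (D2)(a). *)

From Stdlib Require Import List.
Import ListNotations.

Set Implicit Arguments.

Inductive tag := Frown | Smile.
Inductive reward := Star | Check.

Section Game.
Context {St A : Type} (tau : A) (step : St -> A -> St -> Prop).

(* Configurations: dagger is rendered as None.
   CS = Spoiler-owned <(s,t),c,m,r>_S, CD = Duplicator-owned <(s,t),c,m,r>_D. *)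
Inductive conf :=
| CS : St * St -> option (A * St) -> option (St * tag) -> reward -> conf
| CD : St * St -> option (A * St) -> option (St * tag) -> reward -> conf.

Definition rew (x : conf) : reward :=
  match x with CS _ _ _ r => r | CD _ _ _ r => r end.

Definition is_spoiler (x : conf) : Prop :=
  match x with CS _ _ _ _ => True | CD _ _ _ _ => False end.
Definition is_dup (x : conf) : Prop :=
  match x with CS _ _ _ _ => False | CD _ _ _ _ => True end.

Inductive smove : conf -> conf -> Prop :=
| S1 : forall s t c m r, c <> None ->
    smove (CS (s,t) c m r) (CD (s,t) c m Star)
| S2a : forall s t m r a s', step s a s' ->
    smove (CS (s,t) None m r) (CD (s,t) (Some (a,s')) (Some (t,Frown)) Star)
| S2b : forall s t c m r a s', step s a s' -> c <> Some (a,s') ->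
    smove (CS (s,t) c m r) (CD (s,t) (Some (a,s')) (Some (t,Frown)) Check)
| S3 : forall s t c m r a t', step t a t' ->
    smove (CS (s,t) c m r) (CD (t,s) (Some (a,t')) (Some (s,Frown)) Check).

(* Duplicator's move (D2)(a), singled out for the notion of eagerness. *)
Inductive d2a : conf -> conf -> Prop :=
| D2a : forall u v a u' vb r v', step vb a v' ->
    d2a (CD (u,v) (Some (a,u')) (Some (vb,Frown)) r)
        (CS (u',v') (Some (a,u')) (Some (v',Smile)) Star).

Inductive dmove : conf -> conf -> Prop :=
| D1 : forall u v a u' vb f r, a = tau ->
    dmove (CD (u,v) (Some (a,u')) (Some (vb,f)) r) (CS (u',vb) None None Check)
| D2a_move : forall x y, d2a x y -> dmove x y
| D2b : forall u v a u' vb r v', step vb a v' ->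
    dmove (CD (u,v) (Some (a,u')) (Some (vb,Frown)) r) (CS (u',v') None None Check)
| D3a : forall u v a u' vb f r v', step vb tau v' ->
    dmove (CD (u,v) (Some (a,u')) (Some (vb,f)) r)
          (CS (u,v') (Some (a,u')) (Some (v',f)) Star)
| D3b : forall u v a u' vb r v', step vb tau v' ->
    dmove (CD (u,v) (Some (a,u')) (Some (vb,Smile)) r) (CS (u',v') None None Check).

Definition move (x y : conf) : Prop :=
  match x with CS _ _ _ _ => smove x y | CD _ _ _ _ => dmove x y end.

Definition stuck (x : conf) : Prop := ~ exists y, move x y.

(* A (history-dependent) strategy of Duplicator: given the history of the play
   so far (most recent configuration first), the next configuration. *)
Definition dstrat := list conf -> conf.

Fixpoint hist (p : nat -> conf) (n : nat) : list conf :=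
  match n with 0 => [p 0] | S k => p (S k) :: hist p k end.

Definition path_upto (p : nat -> conf) (n : nat) : Prop :=
  forall i, i < n -> move (p i) (p (S i)).

Definition consistent_upto (sigma : dstrat) (p : nat -> conf) (n : nat) : Prop :=
  forall i, i < n -> is_dup (p i) -> p (S i) = sigma (hist p i).

(* sigma is a winning strategy of Duplicator from x0:
   (1) at every reachable Duplicator configuration where she can move, sigma
       prescribes a legal move (sigma is a genuine strategy);
   (2) every finite (maximal) play from x0 consistent with sigma ends in a
       configuration where Spoiler is stuck;
   (3) every infinite play from x0 consistent with sigma visits infinitely
       many configurations with reward checkmark. *)
Definition dwinning_from (sigma : dstrat) (x0 : conf) : Prop :=
  (forall p n, p 0 = x0 -> path_upto p n -> consistent_upto sigma p n ->
     is_dup (p n) -> (exists y, dmove (p n) y) -> dmove (p n) (sigma (hist p n)))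
  /\ (forall p n, p 0 = x0 -> path_upto p n -> consistent_upto sigma p n ->
     stuck (p n) -> is_spoiler (p n))
  /\ (forall p, p 0 = x0 -> (forall i, move (p i) (p (S i))) ->
     (forall i, is_dup (p i) -> p (S i) = sigma (hist p i)) ->
     forall N, exists i, N <= i /\ rew (p i) = Check).

Definition dwins (x0 : conf) : Prop := exists sigma, dwinning_from sigma x0.

Definition eager (sigma : dstrat) : Prop :=
  forall x h, ~ d2a x (sigma (x :: h)).

End Game.

From Stdlib Require Import List Classical ClassicalEpsilon Lia.
Import ListNotations.

(* Duplicator replays a winning strategy sigma on a simulated play and copies its
   answers, except that an answer by (D2)(a) is replaced by (D2)(b), which ends the
   round with a reward.  If Spoiler then repeats the challenge sigma was answering,
   the simulated Spoiler resumes it by (S1), and the two plays differ only in the tag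
   of the pending challenge (frown instead of smile) until sigma ends the round.  Its
   (D1) is copied; its (D3)(b) is copied as (D2)(b) for a tau-challenge and otherwise
   answered by (D3)(a), after which the simulated Spoiler copies the real one, using
   (S2)(a) to imitate (S1).  Since strategies see whole histories, the simulated play
   is recomputed from the real history at every move.  Every reward of the simulated
   play is matched by one of the eager play, except when sigma ends a repeated
   non-tau challenge by (D3)(b); this happens only after a reward was collected by
   (D2)(b), so infinitely many simulated rewards give infinitely many eager ones. *)

Section Plays.
Context {St A : Type} (tau : A) (step : St -> A -> St -> Prop).
Local Notation config := (@conf St A).

Lemma hd_hist (p : nat -> config) d i : hd d (hist p i) = p i.
Proof. destruct i; reflexivity. Qed.

Lemma path_upto_S p n :
  path_upto tau step p (S n) <-> path_upto tau step p n /\ move tau step (p n) (p (S n)).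
Proof.
  split.
  - intros H; split; [intros i Hi; apply H; lia | apply H; lia].
  - intros [H Hn] i Hi; assert (i < n \/ i = n) as [Hlt | ->] by lia; auto.
Qed.

Lemma consistent_upto_S (sigma : @dstrat St A) p n :
  consistent_upto sigma p (S n) <->
  consistent_upto sigma p n /\ (is_dup (p n) -> p (S n) = sigma (hist p n)).
Proof.
  split.
  - intros H; split; [intros i Hi; apply H; lia | apply H; lia].
  - intros [H Hn] i Hi; assert (i < n \/ i = n) as [Hlt | ->] by lia; auto.
Qed.

Lemma smove_move x y : smove step x y -> move tau step x y.
Proof. intro H; destruct x; [exact H | inversion H]. Qed.

Lemma dmove_move x y : dmove tau step x y -> move tau step x y.
Proof. intro H; destruct x; [inversion H as [| ? ? Hd | | |]; inversion Hd | exact H]. Qed.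

Lemma smove_spoiler x y : smove step x y -> is_spoiler x.
Proof. intro H; inversion H; exact I. Qed.

Lemma move_smove x y : is_spoiler x -> move tau step x y -> smove step x y.
Proof. destruct x; simpl; tauto. Qed.

Lemma winning_reply (sigma : @dstrat St A) x0 p n :
  dwinning_from tau step sigma x0 -> p 0 = x0 ->
  path_upto tau step p n -> consistent_upto sigma p n -> is_dup (p n) ->
  dmove tau step (p n) (sigma (hist p n)).
Proof.
  intros (W1 & W2 & _) H0 Hp Hc Hd; apply W1; auto.
  destruct (classic (exists y, move tau step (p n) y)) as [[y Hy] | Hst].
  - exists y; destruct (p n); [contradiction | exact Hy].
  - apply W2 in Hst; auto; destruct (p n); contradiction.
Qed.

End Plays.

(* [Skipped]: sigma answered by (D2)(a), the eager play by (D2)(b).  [Rechallenged]: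
   Spoiler repeated that challenge, which is pending with a frown in the eager play and
   with a smile in the simulated one.  [Lagging]: sigma ended that round by (D3)(b), the
   eager play answered by (D3)(a).  Below, n is a position of the eager play, o the
   matching position of the simulated play, and primes denote the next positions. *)
Inductive mode := Sync | Skipped | Rechallenged | Lagging.

Section Simulation.
Context {St A : Type} (tau : A) (step : St -> A -> St -> Prop).
Local Notation config := (@conf St A).

Definition with_reward (r : reward) (x : config) : config :=
  match x with CS p c m _ => CS p c m r | CD p c m _ => CD p c m r end.

Lemma with_reward_idem r r' x : with_reward r (with_reward r' x) = with_reward r x.
Proof. destruct x; reflexivity. Qed.

Lemma smove_with_reward x x' y :
  with_reward Star x = with_reward Star x' -> smove step x y -> smove step x' y.
Proof.
  intros E H; destruct x' as [p c m r|p c m r]; inversion H; subst;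
    simpl in E; try discriminate; injection E; intros; subst; econstructor; eauto.
Qed.

Lemma dmove_with_reward x x' y :
  with_reward Star x = with_reward Star x' -> dmove tau step x y -> dmove tau step x' y.
Proof.
  intros E H; destruct x' as [p c m r|p c m r]; inversion H; subst;
    try match goal with Hd : d2a _ _ _ |- _ => inversion Hd; subst end;
    simpl in E; try discriminate; injection E; intros; subst.
  all: try (econstructor; eauto; fail).
  apply D2a_move; constructor; assumption.
Qed.

Definition frown_to_smile (x y : config) : bool :=
  match x, y with
  | CD _ _ (Some (_, Frown)) _, CS _ _ (Some (_, Smile)) _ => true
  | _, _ => false
  end.

Definition eagerize (x y : config) : config :=
  if frown_to_smile x y then
    match y with CS q _ _ _ => CS q None None Check | _ => y end
  else y.

Lemma eagerize_not_d2a x y : ~ d2a step x (eagerize x y).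
Proof.
  intro H; inversion H; subst; unfold eagerize in *.
  destruct y as [q c [[w [|]]|] r0|q c m r0]; simpl in *; congruence.
Qed.

Lemma frown_to_smile_with_reward x x' y :
  with_reward Star x = with_reward Star x' -> frown_to_smile x y = frown_to_smile x' y.
Proof.
  destruct x, x'; simpl; intro E; try discriminate; injection E; intros; subst; reflexivity.
Qed.

Definition related (m : mode) (n o : config) : Prop :=
  match m with
  | Sync => with_reward Star n = with_reward Star o
  | Skipped => exists u v a,
      n = CS (u, v) None None Check /\ o = CS (u, v) (Some (a, u)) (Some (v, Smile)) Star
  | Rechallenged => exists u v a, step u a u /\
      ((n = CS (u, v) (Some (a, u)) (Some (v, Frown)) Star /\
        o = CS (u, v) (Some (a, u)) (Some (v, Smile)) Star) \/
       (exists r, n = CD (u, v) (Some (a, u)) (Some (v, Frown)) r /\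
        o = CD (u, v) (Some (a, u)) (Some (v, Smile)) Star))
  | Lagging => exists u v a, step u a u /\
      n = CS (u, v) (Some (a, u)) (Some (v, Frown)) Star /\ o = CS (u, v) None None Check
  end.

Definition mode_step (m m' : mode) : Prop :=
  match m with
  | Sync => m' = Sync \/ m' = Skipped
  | Lagging => m' = Sync
  | _ => True
  end.

Definition tracks (m m' : mode) (n' o' : config) : Prop :=
  related m' n' o' /\ mode_step m m' /\
  (rew o' = Check -> rew n' = Check \/ m = Skipped \/ m' = Lagging).

Definition spoiler_step (m : mode) (o n' : config) : config * mode :=
  match m, o with
  | (Skipped | Rechallenged), CS p c (Some (v, f)) _ =>
      if excluded_middle_informative (exists r, n' = CD p c (Some (v, Frown)) r)
      then (CD p c (Some (v, f)) Star, Rechallenged)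
      else (with_reward Check n', Sync)
  | _, _ => (n', Sync)
  end.

Definition dup_step (m : mode) (o so : config) : config * mode :=
  match m, o, so with
  | Sync, _, _ => (so, if frown_to_smile o so then Skipped else Sync)
  | Rechallenged, CD _ (Some (a, u')) _ _, CS (u, v') None None _ =>
      if excluded_middle_informative (a = tau) then (so, Sync)
      else (CS (u, v') (Some (a, u')) (Some (v', Frown)) Star, Lagging)
  | Rechallenged, _, CS q c (Some (v', _)) r => (CS q c (Some (v', Frown)) r, Rechallenged)
  | _, _, _ => (so, Sync)
  end.

Lemma related_dup m n o : related m n o -> is_dup n -> is_dup o.
Proof.
  destruct m; simpl.
  - destruct n, o; simpl; intros E; try discriminate; auto.
  - intros (u & v & a & -> & ->); auto.
  - intros (u & v & a & _ & [[-> ->]|(r & -> & ->)]); simpl; auto.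
  - intros (u & v & a & _ & -> & ->); auto.
Qed.

Lemma tracks_sync m n' : mode_step m Sync -> tracks m Sync n' n'.
Proof. repeat split; auto. Qed.

Lemma lagging_smove n o n' : related Lagging n o -> smove step n n' -> smove step o n'.
Proof.
  intros (u & v & a & Hu & -> & ->) H; inversion H; subst.
  - apply S2a; assumption.
  - apply S2b; [assumption | discriminate].
  - apply S3; assumption.
Qed.

Lemma tracks_with_check m n' :
  mode_step m Sync -> rew n' = Check \/ m = Skipped -> tracks m Sync n' (with_reward Check n').
Proof.
  intros Hm Hr; split; [simpl; rewrite with_reward_idem; reflexivity | split; [exact Hm | tauto]].
Qed.

Lemma challenge_spoiler_step m n o n' o' m' :
  m = Skipped \/ m = Rechallenged -> related m n o -> smove step n n' ->
  spoiler_step m o n' = (o', m') -> smove step o o' /\ tracks m m' n' o'.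
Proof.
  intros Hm Hrel H E.
  assert (Ho : exists u v a, o = CS (u, v) (Some (a, u)) (Some (v, Smile)) Star /\
            ((m = Skipped /\ n = CS (u, v) None None Check) \/
             (m = Rechallenged /\ step u a u /\
              n = CS (u, v) (Some (a, u)) (Some (v, Frown)) Star))).
  { destruct Hm; subst m; simpl in Hrel.
    - destruct Hrel as (u & v & a & -> & ->); eauto 7.
    - destruct Hrel as (u & v & a & Hu & [[-> ->]|(r & -> & ->)]); [eauto 8 | inversion H]. }
  clear Hrel; destruct Ho as (u & v & a & -> & [[-> ->] | (-> & Hu & ->)]);
    unfold spoiler_step in E;
    destruct (excluded_middle_informative _) as [[r ->] | NE]; injection E as <- <-.
  - assert (Hu : step u a u) by (inversion H; subst; first [assumption | congruence]).
    split; [apply S1; discriminate |].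
    split; [exists u, v, a; eauto | split; [exact I | discriminate]].
  - inversion H; subst; try congruence;
      (split; [simpl | apply tracks_with_check; [exact I | auto]]).
    + apply S2b; [assumption | intros [= <- <-]; eauto].
    + apply S2b; [assumption | intros [= <- <-]; eauto].
    + apply S3; assumption.
  - split; [apply S1; discriminate |].
    split; [exists u, v, a; eauto | split; [exact I | discriminate]].
  - inversion H; subst; [exfalso; eauto | |];
      (split; [simpl | apply tracks_with_check; [exact I | auto]]).
    + apply S2b; assumption.
    + apply S3; assumption.
Qed.

Lemma spoiler_step_sound m n o n' o' m' :
  related m n o -> smove step n n' ->
  spoiler_step m o n' = (o', m') -> smove step o o' /\ tracks m m' n' o'.
Proof.
  intros Hrel H E; destruct m.
  - injection E as <- <-; split; [eapply smove_with_reward; eauto | apply tracks_sync; now left].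
  - eapply challenge_spoiler_step; eauto.
  - eapply challenge_spoiler_step; eauto.
  - injection E as <- <-; split; [eapply lagging_smove; eauto | apply tracks_sync; reflexivity].
Qed.

Lemma sync_dup_step n o so :
  related Sync n o -> dmove tau step o so ->
  dmove tau step n (eagerize n so) /\
  tracks Sync (if frown_to_smile o so then Skipped else Sync) (eagerize n so) so.
Proof.
  intros Hrel H; unfold eagerize; rewrite (frown_to_smile_with_reward _ _ so Hrel).
  destruct (frown_to_smile o so) eqn:F.
  - inversion H; subst; simpl in F;
      try match goal with f : tag |- _ => destruct f end; try discriminate.
    match goal with Hd : d2a _ _ _ |- _ => inversion Hd; subst end.
    destruct n; simpl in Hrel; [discriminate | injection Hrel as -> -> ->].
    split; [apply D2b; assumption | split; [simpl; eauto 6 | split; [now right | discriminate]]].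
  - split; [exact (dmove_with_reward _ _ _ (eq_sym Hrel) H) | apply tracks_sync; now left].
Qed.

Lemma rechallenged_dup_step n o so n' m' :
  related Rechallenged n o -> is_dup n -> dmove tau step o so ->
  dup_step Rechallenged o so = (n', m') ->
  dmove tau step n (eagerize n n') /\ tracks Rechallenged m' (eagerize n n') so.
Proof.
  intros (u & v & a & Hu & [[-> ->] | (r & -> & ->)]) Hd H E; [contradiction |].
  inversion H; subst; simpl in E;
    try match goal with Hd : d2a _ _ _ |- _ => inversion Hd end.
  - destruct (excluded_middle_informative _); [| contradiction].
    injection E as <- <-; split; [now apply D1 | now apply tracks_sync].
  - injection E as <- <-; split; [now apply D3a |].
    split; [exists u, v', a; eauto | split; [exact I | discriminate]].
  - destruct (excluded_middle_informative _) as [-> | Ha]; injection E as <- <-.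
    + split; [now apply D2b | now apply tracks_sync].
    + split; [now apply D3a |].
      split; [exists u, v', a; eauto | split; [exact I | auto]].
Qed.

Lemma dup_step_sound m n o so n' m' :
  related m n o -> is_dup n -> dmove tau step o so ->
  dup_step m o so = (n', m') ->
  dmove tau step n (eagerize n n') /\ tracks m m' (eagerize n n') so.
Proof.
  intros Hrel Hd H E; destruct m.
  - injection E as <- <-; now apply sync_dup_step.
  - destruct Hrel as (u & v & a & -> & _); contradiction.
  - eapply rechallenged_dup_step; eauto.
  - destruct Hrel as (u & v & a & _ & -> & _); contradiction.
Qed.

End Simulation.

Lemma sync_persists (md : nat -> mode) N j :
  (forall i, mode_step (md i) (md (S i))) -> (forall i, N <= i -> md i <> Skipped) ->
  N <= j -> md j = Sync -> forall k, j <= k -> md k = Sync.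
Proof.
  intros Hstep Hskip Hj Hsync k Hk; induction Hk as [| k Hk IH]; [assumption |].
  specialize (Hstep k); rewrite IH in Hstep.
  destruct Hstep as [E | E]; [assumption | exfalso; apply (Hskip (S k)); [lia | assumption]].
Qed.

Lemma checks_transfer (rn ro : nat -> reward) (md : nat -> mode) :
  (forall i, mode_step (md i) (md (S i))) ->
  (forall i, md i = Skipped -> rn i = Check) ->
  (forall i, ro (S i) = Check -> rn (S i) = Check \/ md i = Skipped \/ md (S i) = Lagging) ->
  (forall N, exists i, N <= i /\ ro i = Check) ->
  forall N, exists i, N <= i /\ rn i = Check.
Proof.
  intros Hstep Hskip Hcov Hro N; apply NNPP; intro Hno.
  assert (Hn : forall i, N <= i -> rn i <> Check) by eauto.
  assert (Hs : forall i, N <= i -> md i <> Skipped) by (intros i Hi E; apply (Hn i Hi); auto).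
  destruct (Hro (S N)) as [[| i] [Hi Ci]]; [lia |].
  destruct (Hcov i Ci) as [E | [E | Elag]];
    [apply (Hn (S i)); [lia | assumption] | apply (Hs i); [lia | assumption] |].
  (* After the [Lagging] position, [Sync] persists, as [Skipped] positions carry rewards. *)
  assert (Hsync : forall k, S (S i) <= k -> md k = Sync).
  { apply (sync_persists md N); [assumption | assumption | lia |].
    specialize (Hstep (S i)); rewrite Elag in Hstep; exact Hstep. }
  destruct (Hro (S (S (S i)))) as [[| k] [Hk Ck]]; [lia |].
  destruct (Hcov k Ck) as [E | [E | E]].
  - apply (Hn (S k)); [lia | assumption].
  - rewrite Hsync in E by lia; discriminate.
  - rewrite Hsync in E by lia; discriminate.
Qed.

Section EagerStrategy.
Context {St A : Type} (tau : A) (step : St -> A -> St -> Prop) (sigma : @dstrat St A).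
Local Notation config := (@conf St A).

Definition simulate_step (x y : config) (r : list config * mode) : list config * mode :=
  let sh := fst r in
  match y with
  | CS _ _ _ _ => let (o', m') := spoiler_step (snd r) (hd y sh) x in (o' :: sh, m')
  | CD _ _ _ _ => (sigma sh :: sh, snd (dup_step tau (snd r) (hd y sh) (sigma sh)))
  end.

Fixpoint simulate (l : list config) : list config * mode :=
  match l with
  | x :: ((y :: _) as h) => simulate_step x y (simulate h)
  | _ => (l, Sync)
  end.

Definition eager_strategy (l : list config) : config :=
  match l with
  | [] => sigma []
  | x :: _ =>
      let r := simulate l in
      eagerize x (fst (dup_step tau (snd r) (hd x (fst r)) (sigma (fst r))))
  end.

Lemma eager_strategy_eager : eager step eager_strategy.
Proof. intros x h; apply eagerize_not_d2a. Qed.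

Definition sim_play (p : nat -> config) (i : nat) : config :=
  hd (p 0) (fst (simulate (hist p i))).

Definition sim_mode (p : nat -> config) (i : nat) : mode := snd (simulate (hist p i)).

Lemma simulate_hist_S p i :
  simulate (hist p (S i)) = simulate_step (p (S i)) (p i) (simulate (hist p i)).
Proof. destruct i; reflexivity. Qed.

Lemma simulate_hist p i : fst (simulate (hist p i)) = hist (sim_play p) i.
Proof.
  induction i as [| i IH]; [reflexivity |].
  assert (Hcons : exists o', fst (simulate (hist p (S i))) = o' :: fst (simulate (hist p i))).
  { rewrite simulate_hist_S; unfold simulate_step.
    destruct (p i); [destruct (spoiler_step _ _ _) |]; eexists; reflexivity. }
  destruct Hcons as [o' Hcons].
  change (hist (sim_play p) (S i)) with (sim_play p (S i) :: hist (sim_play p) i).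
  unfold sim_play at 1; rewrite Hcons, IH; reflexivity.
Qed.

Lemma sim_play_spoiler p i :
  is_spoiler (p i) ->
  spoiler_step (sim_mode p i) (sim_play p i) (p (S i)) = (sim_play p (S i), sim_mode p (S i)).
Proof.
  intros Hs; unfold sim_play at 2, sim_mode at 2; rewrite simulate_hist_S.
  unfold simulate_step; rewrite simulate_hist, hd_hist.
  destruct (p i); [| contradiction].
  destruct (spoiler_step _ _ _); reflexivity.
Qed.

Lemma sim_play_dup p i :
  is_dup (p i) ->
  sim_play p (S i) = sigma (hist (sim_play p) i) /\
  sim_mode p (S i) = snd (dup_step tau (sim_mode p i) (sim_play p i) (sim_play p (S i))).
Proof.
  intros Hd.
  assert (E : sim_play p (S i) = sigma (hist (sim_play p) i)).
  { unfold sim_play at 1; rewrite simulate_hist_S; unfold simulate_step.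
    rewrite simulate_hist; destruct (p i); [contradiction | reflexivity]. }
  split; [exact E |].
  rewrite E; unfold sim_mode at 1; rewrite simulate_hist_S; unfold simulate_step.
  rewrite simulate_hist, hd_hist; destruct (p i); [contradiction | reflexivity].
Qed.

Lemma eager_strategy_hist p i :
  eager_strategy (hist p i) =
  eagerize (p i) (fst (dup_step tau (sim_mode p i) (sim_play p i) (sigma (hist (sim_play p) i)))).
Proof.
  assert (Hh : exists tl, hist p i = p i :: tl) by (destruct i; eexists; reflexivity).
  destruct Hh as [tl Hh].
  unfold eager_strategy; rewrite Hh; rewrite <- Hh.
  rewrite simulate_hist, hd_hist; reflexivity.
Qed.

Lemma simulation_step p i :
  related step (sim_mode p i) (p i) (sim_play p i) ->
  move tau step (p i) (p (S i)) ->
  (is_dup (p i) -> p (S i) = eager_strategy (hist p i)) ->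
  (is_dup (sim_play p i) -> dmove tau step (sim_play p i) (sigma (hist (sim_play p) i))) ->
  move tau step (sim_play p i) (sim_play p (S i)) /\
  (is_dup (sim_play p i) -> sim_play p (S i) = sigma (hist (sim_play p) i)) /\
  tracks step (sim_mode p i) (sim_mode p (S i)) (p (S i)) (sim_play p (S i)).
Proof.
  intros Hrel Hm Hc Hreply.
  assert (Howner : is_spoiler (p i) \/ is_dup (p i)) by (destruct (p i); simpl; auto).
  destruct Howner as [Hs | Hd].
  - destruct (spoiler_step_sound step _ _ _ _ _ _ Hrel (move_smove tau step _ _ Hs Hm)
                (sim_play_spoiler p i Hs)) as [Ho Ht].
    split; [now apply smove_move | split; [| exact Ht]].
    intro Hdo; apply smove_spoiler in Ho; destruct (sim_play p i); contradiction.
  - pose proof (related_dup step _ _ _ Hrel Hd) as Hdo.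
    destruct (sim_play_dup p i Hd) as [Eo Em].
    rewrite Hc, eager_strategy_hist by exact Hd; rewrite <- Eo in Hreply |- *.
    destruct (dup_step tau (sim_mode p i) (sim_play p i) (sim_play p (S i))) as [n' m'] eqn:E.
    simpl in Em |- *; rewrite Em.
    pose proof (Hreply Hdo) as Ho.
    destruct (dup_step_sound tau step _ _ _ _ _ _ Hrel Hd Ho E) as [_ Ht].
    split; [now apply dmove_move | split; [reflexivity | exact Ht]].
Qed.

Variable x0 : config.
Hypothesis winning : dwinning_from tau step sigma x0.

Lemma simulation p n :
  p 0 = x0 -> path_upto tau step p n -> consistent_upto eager_strategy p n ->
  path_upto tau step (sim_play p) n /\ consistent_upto sigma (sim_play p) n /\
  related step (sim_mode p n) (p n) (sim_play p n).
Proof.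
  intros H0; induction n as [| n IH]; intros Hp Hc.
  - split; [intros i Hi; lia | split; [intros i Hi; lia | reflexivity]].
  - apply path_upto_S in Hp as [Hp Hm]; apply consistent_upto_S in Hc as [Hc Hcn].
    destruct (IH Hp Hc) as (Hq & Hcq & Hrel).
    destruct (simulation_step p n Hrel Hm Hcn) as (Hqm & Hqc & Ht).
    { intro Hdo; apply (winning_reply tau step sigma x0); auto. }
    split; [apply path_upto_S; auto | split; [apply consistent_upto_S; auto | apply Ht]].
Qed.

Lemma eager_strategy_reply p n :
  p 0 = x0 -> path_upto tau step p n -> consistent_upto eager_strategy p n -> is_dup (p n) ->
  dmove tau step (p n) (eager_strategy (hist p n)).
Proof.
  intros H0 Hp Hc Hd; destruct (simulation p n H0 Hp Hc) as (Hq & Hcq & Hrel).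
  pose proof (winning_reply tau step sigma x0 _ n winning H0 Hq Hcq
                (related_dup step _ _ _ Hrel Hd)) as Ho.
  rewrite eager_strategy_hist.
  destruct (dup_step tau _ _ (sigma (hist (sim_play p) n))) as [n' m'] eqn:E.
  exact (proj1 (dup_step_sound tau step _ _ _ _ _ _ Hrel Hd Ho E)).
Qed.

Lemma eager_strategy_winning : dwinning_from tau step eager_strategy x0.
Proof.
  split; [| split].
  - intros p n H0 Hp Hc Hd _; now apply eager_strategy_reply.
  - intros p n H0 Hp Hc Hst.
    destruct (p n) eqn:E; [exact I | exfalso; apply Hst].
    exists (eager_strategy (hist p n)); rewrite <- E.
    apply dmove_move, eager_strategy_reply; auto; rewrite E; exact I.
  - intros p H0 Hm Hc.
    assert (Hsim : forall n, path_upto tau step (sim_play p) n /\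
              consistent_upto sigma (sim_play p) n /\
              related step (sim_mode p n) (p n) (sim_play p n))
      by (intro n; apply simulation; [assumption | intros i _; apply Hm | intros i _; apply Hc]).
    assert (Hstep : forall i,
      move tau step (sim_play p i) (sim_play p (S i)) /\
      (is_dup (sim_play p i) -> sim_play p (S i) = sigma (hist (sim_play p) i)) /\
      tracks step (sim_mode p i) (sim_mode p (S i)) (p (S i)) (sim_play p (S i))).
    { intro i; destruct (Hsim i) as (Hq & Hcq & Hrel).
      apply simulation_step; auto.
      intro Hdo; apply (winning_reply tau step sigma x0); auto. }
    apply (checks_transfer (fun i => rew (p i)) (fun i => rew (sim_play p i)) (sim_mode p)).
    + intro i; apply Hstep.
    + intros i E; destruct (Hsim i) as (_ & _ & Hrel); rewrite E in Hrel.
      destruct Hrel as (u & v & a & -> & _); reflexivity.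
    + intro i; apply Hstep.
    + apply (proj2 (proj2 winning)); [exact H0 | apply Hstep | apply Hstep].
Qed.

End EagerStrategy.

Theorem lemma5p12 (S A : Type) (tau : A) (step : S -> A -> S -> Prop) (s t : S) :
  dwins tau step (CS (s, t) None None Star) ->
  exists sigma : dstrat,
    eager step sigma /\ dwinning_from tau step sigma (CS (s, t) None None Star).
Proof.
  intros [sigma winning].
  exists (eager_strategy tau sigma); split.
  - apply eager_strategy_eager.
  - now apply eager_strategy_winning.
Qed.
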